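(* For real parameters $\alpha,\beta\ge0$ define $\phi^{(\alpha,\beta)}=(\phi^{(\alpha,\beta)}_1,\phi^{(\alpha,\beta)}_2):\Omega_+^2\to\Omega_+^2$ by $$\phi^{(\alpha,\beta)}(x,y)=\left(y(I+\alpha xy)^{-1}(I+\beta xy),\; x(I+\beta yx)^{-1}(I+\alpha yx)\right).$$ For $x,y,z\in\Omega_+$ set $$F_{12}^{(\alpha,\beta)}(x,y,z)=\left(\phi_1^{(\alpha,\beta)}(x,y),\phi_2^{(\alpha,\beta)}(x,y),z\right),\quad F_{13}^{(\alpha,\gamma)}(x,y,z)=\left(\phi_1^{(\alpha,\gamma)}(x,z),y,\phi_2^{(\alpha,\gamma)}(x,z)\right),$$ $$F_{23}^{(\beta,\gamma)}(x,y,z)=\left(x,\phi_1^{(\beta,\gamma)}(y,z),\phi_2^{(\beta,\gamma)}(y,z)\right).$$ Then $\phi$ is a parametric Yang–Baxter map: for all $\alpha,\beta,\gamma\ge0$, $$F_{12}^{(\alpha,\beta)}\circ F_{13}^{(\alpha,\gamma)}\circ F_{23}^{(\beta,\gamma)}=F_{23}^{(\beta,\gamma)}\circ F_{13}^{(\alpha,\gamma)}\circ F_{12}^{(\alpha,\beta)}\quad\text{on }\Omega_+^3.$$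
   Context: Fix an integer $r\ge1$. $\Omega_+$ denotes the set of real symmetric positive definite $r\times r$ matrices and $I$ the identity matrix. For $\alpha,\beta\ge0$ the matrices $I+\alpha xy$ etc. are invertible for $x,y\in\Omega_+$, and $\phi^{(\alpha,\beta)}$ maps $\Omega_+^2$ into $\Omega_+^2$. *)

From mathcomp Require Import all_boot all_order all_algebra.
Set Implicit Arguments. Unset Strict Implicit. Unset Printing Implicit Defensive.
Import Order.TTheory GRing.Theory Num.Theory.
Local Open Scope ring_scope.

Definition posdef (R : realFieldType) (n : nat) (A : 'M[R]_n) : Prop :=
  A^T = A /\ forall v : 'cV[R]_n, v != 0 -> 0 < (v^T *m A *m v) 0 0.

Definition phi1 (R : realFieldType) (n : nat) (a b : R) (x y : 'M[R]_n) : 'M[R]_n :=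
  y *m invmx (1%:M + a *: (x *m y)) *m (1%:M + b *: (x *m y)).
Definition phi2 (R : realFieldType) (n : nat) (a b : R) (x y : 'M[R]_n) : 'M[R]_n :=
  x *m invmx (1%:M + b *: (y *m x)) *m (1%:M + a *: (y *m x)).

Definition F12 (R : realFieldType) (n : nat) (a b : R)
  (t : 'M[R]_n * 'M[R]_n * 'M[R]_n) : 'M[R]_n * 'M[R]_n * 'M[R]_n :=
  let: (x, y, z) := t in (phi1 a b x y, phi2 a b x y, z).
Definition F13 (R : realFieldType) (n : nat) (a c : R)
  (t : 'M[R]_n * 'M[R]_n * 'M[R]_n) : 'M[R]_n * 'M[R]_n * 'M[R]_n :=
  let: (x, y, z) := t in (phi1 a c x z, y, phi2 a c x z).
Definition F23 (R : realFieldType) (n : nat) (b c : R)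
  (t : 'M[R]_n * 'M[R]_n * 'M[R]_n) : 'M[R]_n * 'M[R]_n * 'M[R]_n :=
  let: (x, y, z) := t in (x, phi1 b c y z, phi2 b c y z).

(* Let  invariant2 p a q b = (p q, a p + q^-1, b q + p^-1, p^-1 q^-1).  Whenever
   the relevant matrices are invertible, phi^(a,b) is a refactorization:
   invariant2 (phi1 a b x y) a (phi2 a b x y) b = invariant2 y b x a.
   The quintuple invariant3 p a q b r c is a function of invariant2 p a q b and
   (r, c), and also of (p, a) and invariant2 q b r c; so replacing two adjacent
   entries by their image under phi does not change it.  Three such moves lead
   from invariant3 z gamma y beta x alpha to the invariant of either side of the
   Yang-Baxter identity.  On positive definite matrices invariant3 is injective:
   r and then p solve linear equations whose coefficients are positive definite
   up to invertible factors, and q is then read off the product p q r. *)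

From mathcomp Require Import all_boot all_order all_algebra.
Import Order.TTheory GRing.Theory Num.Theory.
Set Implicit Arguments. Unset Strict Implicit. Unset Printing Implicit Defensive.
Local Open Scope ring_scope.

Section Invariants.
Variables (R : comPzRingType) (A : unitAlgType R).
Implicit Types (p q r x y : A) (a b c : R).

Lemma comm_1DZ a b (u : A) : GRing.comm (1 + a *: u) (1 + b *: u).
Proof.
have cZ : GRing.comm (b *: u) (a *: u).
  by rewrite /GRing.comm -!scalerAl -!scalerAr !scalerA mulrC.
apply: commrD; first exact: commr1.
by apply/commr_sym/commrD; [exact: commr1 | exact: cZ].
Qed.

Lemma commr_1DZ c (u : A) : GRing.comm u (1 + c *: u).
Proof.
apply: commrD; first exact: commr1.
by rewrite /GRing.comm -scalerAl -scalerAr.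
Qed.

Lemma mulr_1DZM c x y : x * (1 + c *: (y * x)) = (1 + c *: (x * y)) * x.
Proof. by rewrite mulrDr mulr1 mulrDl mul1r -scalerAr -scalerAl mulrA. Qed.

Lemma mulr_1DZMV c x y :
  (1 + c *: (x * y)) \is a GRing.unit -> (1 + c *: (y * x)) \is a GRing.unit ->
  x * (1 + c *: (y * x))^-1 = (1 + c *: (x * y))^-1 * x.
Proof.
move=> uI uJ; apply: (mulrI uI).
by rewrite [LHS]mulrA -mulr_1DZM mulrK // mulVKr.
Qed.

Definition invariant2 p a q b : A * A * A * A :=
  (p * q, a *: p + q^-1, b *: q + p^-1, p^-1 * q^-1).

Lemma invariant2_refactor a b x y :
  x \is a GRing.unit -> y \is a GRing.unit ->
  (1 + a *: (x * y)) \is a GRing.unit -> (1 + b *: (x * y)) \is a GRing.unit ->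
  (1 + b *: (y * x)) \is a GRing.unit ->
  invariant2 (y * (1 + a *: (x * y))^-1 * (1 + b *: (x * y))) a
             (x * (1 + b *: (y * x))^-1 * (1 + a *: (y * x))) b = invariant2 y b x a.
Proof.
set Ia := 1 + a *: (x * y); set Ib := 1 + b *: (x * y).
move=> ux uy uIa uIb uJb.
have -> : x * (1 + b *: (y * x))^-1 * (1 + a *: (y * x)) = Ib^-1 * Ia * x.
  by rewrite mulr_1DZMV // -[LHS]mulrA mulr_1DZM mulrA.
set u := y * Ia^-1 * Ib; set v := Ib^-1 * Ia * x.
have uu : u \is a GRing.unit by rewrite !unitrMl ?unitrV.
have uv : v \is a GRing.unit by rewrite !unitrMl ?unitrV.
have uV : u^-1 = Ib^-1 * Ia * y^-1.
  by rewrite !invrM ?unitrMl ?unitrV // invrK mulrA.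
have vV : v^-1 = x^-1 * Ia^-1 * Ib.
  by rewrite !invrM ?unitrMl ?unitrV // invrK mulrA.
rewrite /invariant2; congr (_, _, _, _).
- by rewrite /u /v -!mulrA (mulrA Ib) mulrV // mul1r mulKr.
- rewrite vV /u scalerAl scalerAl -!mulrDl.
  have -> : a *: y + x^-1 = x^-1 * Ia by rewrite mulrDr mulr1 -scalerAr mulKr // addrC.
  by rewrite mulrK // mulrDr mulr1 -scalerAr mulKr // addrC.
- rewrite uV /v scalerAr -mulrDr.
  have -> : b *: x + y^-1 = Ib * y^-1 by rewrite mulrDl mul1r -scalerAl mulrK // addrC.
  rewrite mulrA -(mulrA Ib^-1) comm_1DZ mulKr //.
  by rewrite mulrDl mul1r -scalerAl mulrK // addrC.
- rewrite -!invrM //; congr (_^-1); rewrite /u /v -!mulrA (mulrA x).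
  rewrite (mulrA (x * y)) (commrV (commr_1DZ a (x * y))) -mulrA (mulrA Ia).
  by rewrite mulrV // mul1r commr_1DZ mulKr.
Qed.

Definition invariant3 p a q b r c : A * A * A * A * A :=
  (p * q * r, c *: r + a *: p + q^-1,
   (a * b) *: (p * q) + a *: (p * r^-1) + q^-1 * r^-1,
   b *: q + p^-1 + r^-1, p^-1 * q^-1 * r^-1).

Lemma invariant3_split12 p a q b r c : invariant3 p a q b r c =
  let: (P, Q, T, U) := invariant2 p a q b in
  (P * r, c *: r + Q, (a * b) *: P + Q * r^-1, T + r^-1, U * r^-1).
Proof. by rewrite /= mulrDl -scalerAl !addrA. Qed.

Lemma invariant3_split23 p a q b r c : invariant3 p a q b r c =
  let: (P, Q, T, U) := invariant2 q b r c in
  (p * P, a *: p + T, a *: (p * Q) + U, p^-1 + Q, p^-1 * U).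
Proof.
rewrite /= !mulrA mulrDr -scalerAr scalerDr scalerA.
by rewrite (addrCA (a *: p)) (addrCA p^-1) !addrA.
Qed.

Lemma invariant3_swap12 p a q b r c p' q' :
  invariant2 p a q b = invariant2 p' b q' a -> invariant3 p a q b r c = invariant3 p' b q' a r c.
Proof. by move=> e; rewrite invariant3_split12 e -[a * b]mulrC -invariant3_split12. Qed.

Lemma invariant3_swap23 p a q b r c q' r' :
  invariant2 q b r c = invariant2 q' c r' b -> invariant3 p a q b r c = invariant3 p a q' c r' b.
Proof. by move=> e; rewrite invariant3_split23 e -invariant3_split23. Qed.

Lemma invariant3_solve_r p a q b r c : r \is a GRing.unit ->
  ((a * b) *: (p * q) + a *: (p * r^-1) + q^-1 * r^-1 + c%:A) * r =
  (a * b) *: (p * q * r) + (c *: r + a *: p + q^-1).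
Proof.
move=> ur; rewrite !mulrDl -!scalerAl !mulrVK // mul1r.
by rewrite addrAC -!addrA (addrCA (c *: r)).
Qed.

Lemma invariant3_solve_l p a q b r c : p \is a GRing.unit ->
  p * (a *: (b *: q + p^-1 + r^-1) + p^-1 * q^-1 * r^-1) =
  (a * b) *: (p * q) + a *: (p * r^-1) + q^-1 * r^-1 + a%:A.
Proof.
move=> up; rewrite mulrDr -scalerAr !mulrDr -scalerAr !mulrA !mulrV // mul1r.
rewrite !scalerDr scalerA -!addrA; congr (_ + _).
by rewrite addrC -addrA.
Qed.

Lemma invariant3_inj p q r p' q' r' a b c :
  p \is a GRing.unit -> r \is a GRing.unit ->
  p' \is a GRing.unit -> r' \is a GRing.unit ->
  ((a * b) *: (p * q * r) + (c *: r + a *: p + q^-1)) \is a GRing.unit ->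
  ((a * b) *: (p * q * r) + (a *: r + a *: p + q^-1)) \is a GRing.unit ->
  invariant3 p a q b r c = invariant3 p' a q' b r' c -> (p, q, r) = (p', q', r').
Proof.
move=> up ur up' ur' uWc uWa [e1 e2 e3 e4 e5].
set K := (a * b) *: (p * q) + a *: (p * r^-1) + q^-1 * r^-1.
have uK d : ((a * b) *: (p * q * r) + (d *: r + a *: p + q^-1)) \is a GRing.unit ->
    (K + d%:A) \is a GRing.unit.
  by move=> uW; rewrite -(mulrK ur (K + d%:A)) invariant3_solve_r // unitrMl ?unitrV.
have er : r = r'.
  apply: (mulrI (uK c uWc)).
  by rewrite invariant3_solve_r // /K e3 e1 e2 invariant3_solve_r.
have ep : p = p'.
  set L := a *: (b *: q + p^-1 + r^-1) + p^-1 * q^-1 * r^-1.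
  have uL : L \is a GRing.unit.
    by rewrite -(mulKr up L) invariant3_solve_l // unitrMr ?unitrV // uK.
  apply: (mulIr uL).
  by rewrite invariant3_solve_l // {1}/L e4 e5 e3 invariant3_solve_l.
subst p' r'; congr (_, _, _).
by apply: (mulrI up); apply: (mulIr ur).
Qed.

End Invariants.

Section Quadratic.
Variables (R : realFieldType) (n : nat).
Implicit Types (A B G : 'M[R]_n) (v : 'cV[R]_n).

Definition quad A v : R := (v^T *m A *m v) 0 0.

Definition psd A : Prop := A^T = A /\ forall v, 0 <= quad A v.

Lemma quadD A B v : quad (A + B) v = quad A v + quad B v.
Proof. by rewrite /quad mulmxDr mulmxDl mxE. Qed.

Lemma quadZ (c : R) A v : quad (c *: A) v = c * quad A v.
Proof. by rewrite /quad -scalemxAr -scalemxAl mxE. Qed.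

Lemma quad_conj G A v : quad (G^T *m A *m G) v = quad A (G *m v).
Proof. by rewrite /quad trmx_mul !mulmxA. Qed.

Lemma posdef_psd A : posdef A -> psd A.
Proof.
case=> sA pA; split=> // v; have [->|nz] := eqVneq v 0.
  by rewrite /quad mulmx0 mxE.
exact/ltW/pA.
Qed.

Lemma psdD A B : psd A -> psd B -> psd (A + B).
Proof.
case=> sA pA [sB pB]; split=> [|v]; first by rewrite linearD /= sA sB.
by rewrite quadD addr_ge0.
Qed.

Lemma psdZ (c : R) A : 0 <= c -> psd A -> psd (c *: A).
Proof.
move=> c0 [sA pA]; split=> [|v]; first by rewrite linearZ /= sA.
by rewrite quadZ mulr_ge0.
Qed.

Lemma psd_conj G A : psd A -> psd (G^T *m A *m G).
Proof.
case=> sA pA; split=> [|v]; first by rewrite !trmx_mul trmxK sA mulmxA.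
by rewrite quad_conj.
Qed.

Lemma posdef_addr A B : posdef A -> psd B -> posdef (A + B).
Proof.
move=> hA [sB pB]; have [sA pA] := hA; split=> [|v nz].
  by rewrite linearD /= sA sB.
by rewrite -/(quad _ v) quadD ltr_wpDr // pA.
Qed.

Lemma posdef_conj G A : G \in unitmx -> posdef A -> posdef (G^T *m A *m G).
Proof.
move=> uG [sA pA]; split=> [|v nz]; first by rewrite !trmx_mul trmxK sA mulmxA.
rewrite -/(quad _ v) quad_conj; apply: pA; apply: contra nz => /eqP Gv0.
by rewrite -(mulKmx uG v) Gv0 mulmx0.
Qed.

Lemma unitmx_ker0 A : (forall v, A *m v = 0 -> v = 0) -> A \in unitmx.
Proof.
move=> kA; rewrite -unitmx_tr unitmxE unitfE; apply/det0P => -[v nz vA].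
have vT0 : v^T = 0 by apply: kA; rewrite -[A]trmxK -trmx_mul vA trmx0.
by rewrite -[v]trmxK vT0 trmx0 eqxx in nz.
Qed.

Lemma posdef_unitmx A : posdef A -> A \in unitmx.
Proof.
case=> _ pA; apply: unitmx_ker0 => v Av0; apply/eqP; apply: contraT => nz.
by have := pA v nz; rewrite -mulmxA Av0 mulmx0 mxE ltxx.
Qed.

End Quadratic.

Section PositiveDefinite.
Variables (R : realFieldType) (n : nat).
Implicit Types (p q r x y : 'M[R]_n.+1) (a b c : R).

Lemma trmx_1DZM c x y : x^T = x -> y^T = y -> (1 + c *: (x * y))^T = 1 + c *: (y * x).
Proof.
move=> sx sy; rewrite linearD linearZ /= -[1]/(1%:M : 'M[R]_n.+1) trmx1.
by rewrite -mulmxE trmx_mul sx sy.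
Qed.

Lemma posdefV q : posdef q -> posdef q^-1.
Proof.
move=> hq; have uq : q \is a GRing.unit by apply: posdef_unitmx.
have sqV : (q^-1)^T = q^-1 by rewrite -[q^-1]/(invmx q) trmx_inv hq.1.
have -> : q^-1 = (q^-1)^T *m q *m q^-1 by rewrite sqV mulmxE mulVr // mul1r.
by apply: posdef_conj => //; rewrite unitrV.
Qed.

Lemma unit_1DZM_posdef a x y :
  posdef x -> posdef y -> 0 <= a -> (1 + a *: (x * y)) \is a GRing.unit.
Proof.
move=> hx hy ha; rewrite -(unitrMr _ (posdef_unitmx hy)); apply: posdef_unitmx.
have -> : y * (1 + a *: (x * y)) = y + a *: (y^T *m x *m y).
  by rewrite hy.1 mulrDr mulr1 -scalerAr mulmxE mulrA.
exact/posdef_addr/psdZ/psd_conj/posdef_psd.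
Qed.



Lemma unit_invariant3_weight a b c p q r :
  posdef p -> posdef q -> posdef r -> 0 <= a -> 0 <= b -> 0 <= c ->
  ((a * b) *: (p * q * r) + (c *: r + a *: p + q^-1)) \is a GRing.unit.
Proof.
move=> hp hq hr ha hb hc; have uq := posdef_unitmx hq.
have [[sq _] [sr _]] := (hq, hr).
set G := 1 + b *: (q * r).
have uGT : G^T \is a GRing.unit.
  by rewrite -[_ \is a _]/(_ \in unitmx) unitmx_tr; apply: unit_1DZM_posdef.
rewrite -(unitrMr _ uGT); apply: posdef_unitmx.
(* G^T times the weight is q^-1 plus a positive semidefinite matrix. *)
have eW : G^T * ((a * b) *: (p * q * r) + (c *: r + a *: p + q^-1)) =
    a *: (G^T * p * G) + G^T * (c *: r + q^-1).
  rewrite -[in RHS]mulrA [in RHS]scalerAr -mulrDr; congr (_ * _).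
  rewrite /G mulrDr mulr1 -scalerAr scalerDr scalerA !mulrA (addrC (a *: p)).
  by rewrite -!addrA (addrCA (a *: p)).
have eT : G^T * (c *: r + q^-1) = q^-1 + ((b * c) *: (r^T * q * r) + (b + c) *: r).
  rewrite /G trmx_1DZM ?sq ?sr // mulrDl mul1r mulrDr -!scalerAl -!scalerAr mulrK //.
  rewrite scalerA scalerDl (addrC (c *: r)) -addrA; congr (_ + _).
  by rewrite addrC -addrA.
rewrite eW eT addrCA.
apply/posdef_addr/psdD; first exact: posdefV.
  by apply: psdZ => //; apply/psd_conj/posdef_psd.
apply: psdD; apply: psdZ.
- exact: mulr_ge0.
- exact/psd_conj/posdef_psd.
- exact: addr_ge0.
- exact: posdef_psd.
Qed.

Lemma phi1_posdef a b x y :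
  posdef x -> posdef y -> 0 <= a -> 0 <= b -> posdef (phi1 a b x y).
Proof.
move=> hx hy ha hb; have [[sx _] [sy _]] := (hx, hy).
set Ia := 1 + a *: (x * y); set Ib := 1 + b *: (x * y).
have uIa : Ia \is a GRing.unit by apply: unit_1DZM_posdef.
have uJa : 1 + a *: (y * x) \is a GRing.unit by apply: unit_1DZM_posdef.
have -> : phi1 a b x y = (Ia^-1)^T * (y * Ib * Ia) * Ia^-1.
  rewrite -[(Ia^-1)^T]/((invmx Ia)^T) trmx_inv trmx_1DZM //.
  rewrite -[invmx _]/((1 + a *: (y * x))^-1) !mulrA mulrK // -mulr_1DZMV //.
apply: posdef_conj; first by rewrite unitmx_inv.
have -> : y * Ib * Ia = y + ((a + b) *: (y^T * x * y) + (a * b) *: ((x * y)^T * y * (x * y))).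
  rewrite sy trmx_mul sx sy mulmxE /Ia /Ib !mulrDr !mulrDl !mulr1 ?mul1r.
  rewrite -!scalerAr -!scalerAl !scalerA !mulrA scalerDl.
  by rewrite -addrA (addrCA (b *: _)) !addrA.
apply: posdef_addr => //; apply: psdD; apply: psdZ.
- exact: addr_ge0.
- exact/psd_conj/posdef_psd.
- exact: mulr_ge0.
- exact/psd_conj/posdef_psd.
Qed.

Lemma phi2_posdef a b x y :
  posdef x -> posdef y -> 0 <= a -> 0 <= b -> posdef (phi2 a b x y).
Proof. by move=> hx hy ha hb; apply: phi1_posdef. Qed.

Lemma invariant2_phi a b x y : posdef x -> posdef y -> 0 <= a -> 0 <= b ->
  invariant2 (phi1 a b x y) a (phi2 a b x y) b = invariant2 y b x a.
Proof.
move=> hx hy ha hb.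
by apply: invariant2_refactor; first [exact: posdef_unitmx | exact: unit_1DZM_posdef].
Qed.

Lemma posdef_invariant3_inj a b c p q r p' q' r' :
  posdef p -> posdef q -> posdef r -> posdef p' -> posdef r' ->
  0 <= a -> 0 <= b -> 0 <= c ->
  invariant3 p a q b r c = invariant3 p' a q' b r' c -> (p, q, r) = (p', q', r').
Proof.
move=> hp hq hr hp' hr' ha hb hc.
by apply: invariant3_inj; first [exact: posdef_unitmx | exact: unit_invariant3_weight].
Qed.

End PositiveDefinite.

Unset Implicit Arguments.

Theorem theorem3 (R : realFieldType) (r : nat) (r_ge1 : (1 <= r)%N)
  (alpha beta gamma : R) (ha : 0 <= alpha) (hb : 0 <= beta) (hc : 0 <= gamma)
  (x y z : 'M[R]_r) (hx : posdef x) (hy : posdef y) (hz : posdef z) :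
  F12 alpha beta (F13 alpha gamma (F23 beta gamma (x, y, z)))
  = F23 beta gamma (F13 alpha gamma (F12 alpha beta (x, y, z))).
Proof.
case: r r_ge1 x y z hx hy hz => // n _ x y z hx hy hz; rewrite /F12 /F13 /F23.
have py1 := phi1_posdef hy hz hb hc; have pz1 := phi2_posdef hy hz hb hc.
have px2 := phi1_posdef hx pz1 ha hc.
have qx1 := phi1_posdef hx hy ha hb; have qy1 := phi2_posdef hx hy ha hb.
have qz2 := phi2_posdef qx1 hz ha hc.
apply: (posdef_invariant3_inj _ _ _ _ _ ha hb hc);
  try exact: phi1_posdef; try exact: phi2_posdef.
rewrite (invariant3_swap12 _ _ (invariant2_phi px2 py1 ha hb)).
rewrite (invariant3_swap23 _ _ (invariant2_phi hx pz1 ha hc)).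
rewrite (invariant3_swap12 _ _ (invariant2_phi hy hz hb hc)).
rewrite (invariant3_swap23 _ _ (invariant2_phi qy1 qz2 hb hc)).
rewrite (invariant3_swap12 _ _ (invariant2_phi qx1 hz ha hc)).
by rewrite (invariant3_swap23 _ _ (invariant2_phi hx hy ha hb)).
Qed.
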